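(* There exist an instance domain $\mathcal{X}$ and a hypothesis class $\mathcal{H}$ consisting of a single hypothesis such that the following holds for all integers $k,l\ge0$: if $k<l$, then for any $a\ge 0$ there exists a strategy of the adversary, all of whose presented sequences satisfy the $l$-bias assumption with respect to $\mathcal{H}$, such that any algorithm guaranteeing a cumulative mistake penalty of at most $k$ in the randomized prediction model must have cumulative abstention penalty at least $a$.
   Context: Randomized prediction model: at round $t$ the adversary presents $x_t\in\mathcal{X}$; the learner outputs $(p_{t,-},p_{t,+},1-p_{t,-}-p_{t,+})$ with $p_{t,-},p_{t,+}\ge0$, $p_{t,-}+p_{t,+}\le 1$ (probabilities of predicting $-1$, $+1$, abstaining); the adversary reveals $y_t\in\{-1,+1\}$. After $n$ rounds the cumulative mistake penalty is $\sum_{t=1}^n \big(I(y_t=-1)p_{t,+}+I(y_t=+1)p_{t,-}\big)$ and the cumulative abstention penalty is $\sum_{t=1}^n(1-p_{t,+}-p_{t,-})$. Hypotheses are maps $\mathcal{X}\to\{-1,+1\}$. $\mathcal{C}^l$ is the class of functions $x\mapsto 1-2I(x\in D)$ for $D\subseteq\mathcal{X}$, $|D|\le l$, and $\mathcal{H}^l=\{x\mapsto h(x)c(x): h\in\mathcal{H},c\in\mathcal{C}^l\}$. A sequence $(x_1,y_1),\dots,(x_n,y_n)$ satisfies the $l$-bias assumption w.r.t. $\mathcal{H}$ if some $h\in\mathcal{H}^l$ has $h(x_t)=y_t$ for all $t$. An algorithm guarantees cumulative mistake penalty at most $k$ if this holds on every admissible sequence. *)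

From Stdlib Require Import Reals List.
Import ListNotations.
Open Scope R_scope.

Inductive label : Type := Neg | Pos.

Definition flip (y : label) : label := match y with Neg => Pos | Pos => Neg end.

Definition isNeg (y : label) : R := match y with Neg => 1 | Pos => 0 end.
Definition isPos (y : label) : R := match y with Neg => 0 | Pos => 1 end.

(* g belongs to H^l : g = h * c with h in H and c in C^l, where
   c(x) = 1 - 2 I(x in D), D a finite subset of X with |D| <= l. *)
Definition in_Hl {X : Type} (H : (X -> label) -> Prop) (l : nat) (g : X -> label) : Prop :=
  exists h : X -> label, H h /\
  exists D : list X, NoDup D /\ (length D <= l)%nat /\
    forall x, (In x D -> g x = flip (h x)) /\ (~ In x D -> g x = h x).

Definition l_bias {X : Type} (H : (X -> label) -> Prop) (l : nat)
  (s : list (X * label)) : Prop :=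
  exists g, in_Hl H l g /\ forall xy, In xy s -> g (fst xy) = snd xy.

(* A learner (deterministic in its output of probabilities): given the past
   labelled examples and the current instance, outputs (p_-, p_+). *)
Definition learner (X : Type) := list (X * label) -> X -> R * R.

Definition valid_learner {X : Type} (L : learner X) : Prop :=
  forall hist x, 0 <= fst (L hist x) /\ 0 <= snd (L hist x) /\
                 fst (L hist x) + snd (L hist x) <= 1.

Definition mistake (p : R * R) (y : label) : R :=
  isNeg y * snd p + isPos y * fst p.

Definition abstain (p : R * R) : R := 1 - snd p - fst p.

Fixpoint mistakes_aux {X : Type} (L : learner X) (hist s : list (X * label)) : R :=
  match s with
  | [] => 0
  | (x, y) :: s' => mistake (L hist x) y + mistakes_aux L (hist ++ [(x, y)]) s'
  end.

Definition mistakes {X : Type} (L : learner X) (s : list (X * label)) : R :=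
  mistakes_aux L [] s.

Definition guarantees_mistakes {X : Type} (H : (X -> label) -> Prop) (l k : nat)
  (L : learner X) : Prop :=
  forall s, l_bias H l s -> mistakes L s <= INR k.

Definition transcript (X : Type) := list (X * (R * R) * label).

Record adversary (X : Type) := {
  adv_rounds : nat;
  adv_x : transcript X -> X;
  adv_y : transcript X -> X -> R * R -> label
}.
Arguments adv_rounds {X}.
Arguments adv_x {X}.
Arguments adv_y {X}.

Definition strip {X : Type} (tr : transcript X) : list (X * label) :=
  map (fun e => (fst (fst e), snd e)) tr.

Fixpoint play_aux {X : Type} (L : learner X) (A : adversary X) (m : nat)
  (tr : transcript X) : transcript X :=
  match m with
  | O => tr
  | S m' =>
      let x := adv_x A tr in
      let p := L (strip tr) x in
      let y := adv_y A tr x p in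
      play_aux L A m' (tr ++ [(x, p, y)])
  end.

Definition play {X : Type} (L : learner X) (A : adversary X) : transcript X :=
  play_aux L A (adv_rounds A) [].

Definition abstentions {X : Type} (tr : transcript X) : R :=
  fold_right (fun e acc => abstain (snd (fst e)) + acc) 0 tr.

(* The adversary presents a fresh instance every round and labels it -1 exactly
   when the learner puts probability at least c = (k + 1/2)/l on +1, until l
   labels -1 have been given; the sequence then differs from the constant
   hypothesis +1 on at most l instances.  Each label -1 costs the learner at least
   c and l c > k, so a learner with mistake bound k never lets the cap bind.
   Hence every round in which it puts less than c on +1 is labelled +1 and costs
   more than 1 - c in abstention plus mistake, and over n rounds the abstention
   penalty is at least (1 - c)(n - l) - k, which exceeds any a for large n. *)

From Stdlib Require Import Reals List Lra Lia.
Import ListNotations.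
Open Scope R_scope.

Definition label_eq_dec (y y' : label) : {y = y'} + {y <> y'}.
Proof. decide equality. Defined.

Lemma neq_flip (y y' : label) : y <> y' -> y' = flip y.
Proof. destruct y, y'; simpl; congruence. Qed.

Definition disagreements {X : Type} (h : X -> label) (s : list (X * label)) : list X :=
  map fst (filter (fun xy =>
    if label_eq_dec (h (fst xy)) (snd xy) then false else true) s).

Lemma NoDup_map_fst_functional {X Y : Type} (s : list (X * Y)) x y y' :
  NoDup (map fst s) -> In (x, y) s -> In (x, y') s -> y = y'.
Proof.
  induction s as [|[x0 y0] s IH]; simpl; [tauto|].
  intros Hnd Hin Hin'. inversion Hnd as [|? ? Hx0 Hnd']; subst.
  assert (Hfresh : forall z, In (x, z) s -> x0 <> x).
  { intros z Hz ->. apply Hx0, (in_map fst _ _ Hz). }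
  destruct Hin as [E|Hin], Hin' as [E'|Hin'].
  - congruence.
  - inversion E; subst. exfalso. exact (Hfresh _ Hin' eq_refl).
  - inversion E'; subst. exfalso. exact (Hfresh _ Hin eq_refl).
  - exact (IH Hnd' Hin Hin').
Qed.

Lemma NoDup_map_fst_filter {X Y : Type} (f : X * Y -> bool) (s : list (X * Y)) :
  NoDup (map fst s) -> NoDup (map fst (filter f s)).
Proof.
  induction s as [|xy s IH]; simpl; [auto|].
  intros Hnd. inversion Hnd as [|? ? Hx Hnd']; subst.
  destruct (f xy); simpl; auto.
  constructor; auto. intros Hin. apply Hx.
  apply in_map_iff in Hin as [xy' [<- Hin]].
  apply filter_In in Hin as [Hin _]. now apply in_map.
Qed.

Lemma l_bias_singleton {X : Type} (eq_dec : forall x x' : X, {x = x'} + {x <> x'})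
    (h : X -> label) (l : nat) (s : list (X * label)) :
  NoDup (map fst s) -> (length (disagreements h s) <= l)%nat ->
  l_bias (fun g => g = h) l s.
Proof.
  intros Hnd Hlen. set (D := disagreements h s).
  exists (fun x => if in_dec eq_dec x D then flip (h x) else h x). split.
  - exists h. split; [reflexivity|]. exists D.
    split; [exact (NoDup_map_fst_filter _ _ Hnd)|]. split; [exact Hlen|].
    intros x. destruct (in_dec eq_dec x D); tauto.
  - intros [x y] Hxy; simpl.
    destruct (in_dec eq_dec x D) as [HD|HD].
    + apply in_map_iff in HD as [[x' y'] [Ex Hin]]. simpl in Ex; subst x'.
      apply filter_In in Hin as [Hin Hdis]. simpl in Hdis.
      rewrite (NoDup_map_fst_functional s x y y' Hnd Hxy Hin).
      destruct (label_eq_dec (h x) y') as [_|Hne]; [discriminate|].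
      symmetry. exact (neq_flip _ _ Hne).
    + destruct (label_eq_dec (h x) y) as [E|Hne]; [exact E|].
      exfalso. apply HD, in_map_iff. exists (x, y). split; [reflexivity|].
      apply filter_In. split; [exact Hxy|]. simpl.
      now destruct (label_eq_dec (h x) y).
Qed.

Lemma play_aux_invariant {X : Type} (L : learner X) (A : adversary X)
    (P : transcript X -> Prop) :
  (forall tr, P tr ->
     let x := adv_x A tr in let p := L (strip tr) x in
     P (tr ++ [(x, p, adv_y A tr x p)])) ->
  forall m tr, P tr -> P (play_aux L A m tr).
Proof.
  intros Hstep m. induction m as [|m IH]; intros tr Htr; simpl; [exact Htr|].
  apply IH, Hstep, Htr.
Qed.

Lemma play_invariant {X : Type} (L : learner X) (A : adversary X)
    (P : transcript X -> Prop) :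
  (forall tr, P tr ->
     let x := adv_x A tr in let p := L (strip tr) x in
     P (tr ++ [(x, p, adv_y A tr x p)])) ->
  P [] -> P (play L A).
Proof. intros Hstep H0. exact (play_aux_invariant L A P Hstep _ _ H0). Qed.

Lemma length_play_aux {X : Type} (L : learner X) (A : adversary X) m tr :
  length (play_aux L A m tr) = (m + length tr)%nat.
Proof.
  revert tr. induction m as [|m IH]; intros tr; simpl; auto.
  rewrite IH, length_app. simpl. lia.
Qed.

Lemma length_play {X : Type} (L : learner X) (A : adversary X) :
  length (play L A) = adv_rounds A.
Proof. unfold play. rewrite length_play_aux. simpl. lia. Qed.

Lemma strip_app {X : Type} (tr tr' : transcript X) :
  strip (tr ++ tr') = strip tr ++ strip tr'.
Proof. apply map_app. Qed.

Lemma mistakes_aux_snoc {X : Type} (L : learner X) hist s x y :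
  mistakes_aux L hist (s ++ [(x, y)]) =
  mistakes_aux L hist s + mistake (L (hist ++ s) x) y.
Proof.
  revert hist. induction s as [|[x' y'] s IH]; intros hist; simpl.
  - rewrite app_nil_r. lra.
  - rewrite IH, <- app_assoc. simpl. lra.
Qed.

Definition mistake_sum {X : Type} (tr : transcript X) : R :=
  fold_right (fun e acc => mistake (snd (fst e)) (snd e) + acc) 0 tr.

Lemma mistake_sum_snoc {X : Type} (tr : transcript X) e :
  mistake_sum (tr ++ [e]) = mistake_sum tr + mistake (snd (fst e)) (snd e).
Proof.
  induction tr as [|e' tr IH]; simpl; [lra|].
  unfold mistake_sum in *. rewrite IH. lra.
Qed.

(* In a played transcript the recorded probabilities are the learner's answers,
   so the mistake penalty can be read off the transcript alone. *)
Lemma mistakes_play {X : Type} (L : learner X) (A : adversary X) :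
  mistakes L (strip (play L A)) = mistake_sum (play L A).
Proof.
  apply play_invariant; [|reflexivity].
  intros tr IH x p. unfold mistakes in *.
  rewrite strip_app, mistake_sum_snoc, <- IH. apply mistakes_aux_snoc.
Qed.

Definition probs_valid (p : R * R) : Prop :=
  0 <= fst p /\ 0 <= snd p /\ fst p + snd p <= 1.

Definition neg_count {X : Type} (tr : transcript X) : nat :=
  length (disagreements (fun _ => Pos) (strip tr)).

Lemma neg_count_app {X : Type} (tr tr' : transcript X) :
  neg_count (tr ++ tr') = (neg_count tr + neg_count tr')%nat.
Proof.
  unfold neg_count, disagreements.
  now rewrite strip_app, filter_app, map_app, length_app.
Qed.

Lemma neg_count_nil {X : Type} : neg_count (@nil (X * (R * R) * label)) = 0%nat.
Proof. reflexivity. Qed.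

Lemma neg_count_cons_Neg {X : Type} (x : X) p tr :
  neg_count ((x, p, Neg) :: tr) = S (neg_count tr).
Proof. reflexivity. Qed.

Lemma neg_count_cons_Pos {X : Type} (x : X) p tr :
  neg_count ((x, p, Pos) :: tr) = neg_count tr.
Proof. reflexivity. Qed.

Lemma mistake_sum_ge_threshold {X : Type} (c : R) (tr : transcript X) :
  Forall (fun e => probs_valid (snd (fst e)) /\
                   (snd e = Neg -> c <= snd (snd (fst e)))) tr ->
  c * INR (neg_count tr) <= mistake_sum tr.
Proof.
  induction tr as [|[[x [pm pp]] y] tr IH]; intros Htr; [simpl; lra|].
  inversion Htr as [|? ? [[Hm [Hp _]] Hneg] Htr']; subst.
  specialize (IH Htr'). cbn [fst snd mistake_sum fold_right] in *. fold (mistake_sum tr).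
  destruct y; rewrite ?neg_count_cons_Neg, ?neg_count_cons_Pos;
    unfold mistake at 1; cbn [fst snd isNeg isPos].
  - rewrite S_INR. specialize (Hneg eq_refl). lra.
  - lra.
Qed.

Lemma abstentions_mistake_sum_ge {X : Type} (c : R) (tr : transcript X) :
  Forall (fun e => probs_valid (snd (fst e)) /\
                   (c <= snd (snd (fst e)) -> snd e = Neg)) tr ->
  (1 - c) * (INR (length tr) - INR (neg_count tr)) <= abstentions tr + mistake_sum tr.
Proof.
  induction tr as [|[[x [pm pp]] y] tr IH]; intros Htr; [simpl; lra|].
  inversion Htr as [|? ? [[Hm [Hp Hs]] Hneg] Htr']; subst.
  specialize (IH Htr').
  cbn [fst snd length mistake_sum abstentions fold_right] in *.
  fold (mistake_sum tr) (abstentions tr). rewrite S_INR.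
  destruct y; rewrite ?neg_count_cons_Neg, ?neg_count_cons_Pos;
    unfold mistake at 1, abstain at 1; cbn [fst snd isNeg isPos].
  - rewrite S_INR. lra.
  - assert (Hlt : pp < c) by (apply Rnot_le_lt; intros Hc; discriminate (Hneg Hc)).
    lra.
Qed.

Section ThresholdAdversary.

Variables (c : R) (l n : nat) (L : learner nat).

Definition threshold_label (tr : transcript nat) (x : nat) (p : R * R) : label :=
  if Rle_dec c (snd p) then
    if (neg_count tr <? l)%nat then Neg else Pos
  else Pos.

(* The instance of round t is t itself, so no instance is repeated. *)
Definition threshold_adversary : adversary nat :=
  {| adv_rounds := n; adv_x := @length _; adv_y := threshold_label |}.

Let A := threshold_adversary.

Lemma threshold_instances_fresh :
  map fst (strip (play L A)) = seq 0 (length (play L A)).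
Proof.
  apply play_invariant; [|reflexivity].
  intros tr IH x p. unfold x; simpl.
  now rewrite strip_app, map_app, length_app, IH, Nat.add_comm, seq_S.
Qed.

Lemma threshold_neg_count_le : (neg_count (play L A) <= l)%nat.
Proof.
  apply play_invariant with (P := fun tr => (neg_count tr <= l)%nat);
    [|rewrite neg_count_nil; lia].
  intros tr IH x p. rewrite neg_count_app. simpl. unfold threshold_label.
  destruct (Rle_dec c (snd p)); [destruct (Nat.ltb_spec (neg_count tr) l)|];
    rewrite ?neg_count_cons_Neg, ?neg_count_cons_Pos, neg_count_nil; lia.
Qed.

Lemma threshold_play_l_bias : l_bias (fun g => g = fun _ => Pos) l (strip (play L A)).
Proof.
  apply (l_bias_singleton Nat.eq_dec).
  - rewrite threshold_instances_fresh. apply seq_NoDup.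
  - exact threshold_neg_count_le.
Qed.

Hypothesis HL : valid_learner L.

Lemma threshold_play_Neg_bet :
  Forall (fun e => probs_valid (snd (fst e)) /\
                   (snd e = Neg -> c <= snd (snd (fst e)))) (play L A).
Proof.
  apply play_invariant; [|constructor].
  intros tr IH x p. apply Forall_app. split; [exact IH|].
  constructor; [|constructor]. split; [exact (HL _ _)|].
  simpl. unfold threshold_label.
  destruct (Rle_dec c (snd p)); [auto | discriminate].
Qed.

Lemma threshold_play_bet_Neg : (neg_count (play L A) < l)%nat ->
  Forall (fun e => probs_valid (snd (fst e)) /\
                   (c <= snd (snd (fst e)) -> snd e = Neg)) (play L A).
Proof.
  apply play_invariant with
    (P := fun tr => (neg_count tr < l)%nat -> Forall _ tr); [|constructor].
  intros tr IH x p Hfew. rewrite neg_count_app in Hfew.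
  apply Forall_app. split; [apply IH; lia|].
  constructor; [|constructor]. split; [exact (HL _ _)|].
  simpl. intros Hc. unfold threshold_label.
  destruct (Rle_dec c (snd p)) as [_|]; [|contradiction].
  destruct (Nat.ltb_spec (neg_count tr) l); [reflexivity | lia].
Qed.

Lemma threshold_play_abstentions (k : nat) :
  INR k < c * INR l -> c <= 1 ->
  guarantees_mistakes (fun g => g = fun _ => Pos) l k L ->
  (1 - c) * (INR n - INR l) - INR k <= abstentions (play L A).
Proof.
  intros Hk Hc HG.
  pose proof (HG _ threshold_play_l_bias) as Hmis. rewrite mistakes_play in Hmis.
  assert (Hfew : (neg_count (play L A) < l)%nat).
  { destruct (proj1 (Nat.lt_eq_cases _ _) threshold_neg_count_le) as [Hlt|Heq];
      [exact Hlt|].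
    pose proof (mistake_sum_ge_threshold c _ threshold_play_Neg_bet) as Hge.
    rewrite Heq in Hge. lra. }
  pose proof (abstentions_mistake_sum_ge c _ (threshold_play_bet_Neg Hfew)) as Hab.
  rewrite length_play in Hab. simpl in Hab.
  apply Nat.lt_le_incl, le_INR in Hfew.
  nra.
Qed.

End ThresholdAdversary.

Theorem mainTheorem3 :
  exists (X : Type) (H : (X -> label) -> Prop),
    (exists h0 : X -> label, forall h, H h <-> h = h0) /\
    forall k l : nat, (k < l)%nat ->
    forall a : R, 0 <= a ->
    exists A : adversary X,
      (forall L : learner X, valid_learner L -> l_bias H l (strip (play L A))) /\
      (forall L : learner X, valid_learner L -> guarantees_mistakes H l k L ->
         a <= abstentions (play L A)).
Proof.
  exists nat, (fun g => g = fun _ => Pos). split; [exists (fun _ => Pos); tauto|].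
  intros k l Hkl a _.
  set (c := (INR k + /2) / INR l).
  pose proof (pos_INR k) as Hk0.
  assert (Hkl' : INR k + 1 <= INR l) by (rewrite <- S_INR; apply le_INR; lia).
  assert (Hcl : c * INR l = INR k + /2) by (unfold c; field; apply Rgt_not_eq; lra).
  assert (Hc1 : 0 < 1 - c) by nra.
  destruct (INR_unbounded (INR l + (a + INR k) / (1 - c))) as [n Hn].
  exists (threshold_adversary c l n). split.
  - intros L _. apply threshold_play_l_bias.
  - intros L HL HG.
    eapply Rle_trans; [|exact (threshold_play_abstentions c l n L HL k
                                  ltac:(lra) ltac:(lra) HG)].
    assert (Hgap : (a + INR k) / (1 - c) * (1 - c) = a + INR k)
      by (field; apply Rgt_not_eq; lra).
    nra.
Qed.
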